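(* Consider a family of metrics on real projective 3-space $RP^3$ (with size tending to infinity), and qudits of dimension $d\ge2$ placed equally spaced along a projective line $RP^1\subset RP^3$. The shift QCA on this $RP^1$ (mapping each operator at a site to the corresponding operator at the next site along the circle $RP^1$) cannot be realized by a finite depth quantum circuit.
   Context: A finite depth quantum circuit (fdqc) is a unitary obtained as the product of a bounded number of layers, each layer a product of unitaries (gates) on disjoint sets of bounded diameter, with the bounds on depth and gate diameter uniform along the family; it realizes a QCA by conjugation $O\mapsto U^\dagger O U$. A QCA is a $*$-automorphism of the operator algebra of the tensor product of the local Hilbert spaces which maps operators supported at a point to operators supported within a bounded distance of that point. *)

From HB Require Import structures.
From mathcomp Require Import all_boot all_order all_algebra.
From mathcomp Require Import all_classical all_reals all_analysis.
From mathcomp Require Import complex.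
From Stdlib Require List.
Set Implicit Arguments. Unset Strict Implicit. Unset Printing Implicit Defensive.
Import Order.TTheory GRing.Theory Num.Theory.
Local Open Scope ring_scope.

(* Points of RP^3 are represented by unit vectors of R^4 (up to sign);
   the round metric of scale s is  d([x],[y]) = s * arccos |<x,y>|.      *)
Definition rp3_dist (R : realType) (s : R) (x y : 'rV[R]_4) : R :=
  s * acos `|(x *m y^T) 0 0|.

(* N.+1 sites equally spaced along the projective line
   RP^1 = {[cos t : sin t : 0 : 0]} (t in [0, pi)). *)
Definition site_pt (R : realType) (N : nat) (k : 'I_N.+1) : 'rV[R]_4 :=
  let t := pi * (k%:R) / (N.+1)%:R in
  \row_(j < 4) (if val j == 0%N then cos t else if val j == 1%N then sin t else 0).

(* Scale making the spacing between consecutive sites equal to a: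
   RP^1 has length pi * s, so s = (N+1) a / pi. *)
Definition rp3_scale (R : realType) (N : nat) (a : R) : R := (N.+1)%:R * a / pi.

Definition site_dist (R : realType) (N : nat) (a : R) (i j : 'I_N.+1) : R :=
  rp3_dist (rp3_scale N a) (site_pt R i) (site_pt R j).

Definition diam_le (R : realType) (N : nat) (a : R) (S : {set 'I_N.+1}) (r : R) :=
  forall i j, i \in S -> j \in S -> site_dist a i j <= r.

(* Computational basis states: configurations 'I_N.+1 -> 'I_d;
   operators are matrices indexed by configurations. *)
Definition cfg (N d : nat) := {ffun 'I_N.+1 -> 'I_d}.
Definition Op (R : realType) (N d : nat) := cfg N d -> cfg N d -> R[i].

Section Ops.
Variables (R : realType) (N d : nat).
Local Notation Op := (Op R N d).

Definition op_mul (A B : Op) : Op := fun x y => \sum_(z : cfg N d) A x z * B z y.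
Definition op_id : Op := fun x y => (x == y)%:R.
Definition op_adj (A : Op) : Op := fun x y => (A y x)^*.
Definition op_eq (A B : Op) : Prop := forall x y, A x y = B x y.

Definition unitary (U : Op) : Prop :=
  op_eq (op_mul (op_adj U) U) op_id /\ op_eq (op_mul U (op_adj U)) op_id.

(* O = O_S (tensor) 1 on the complement of S *)
Definition supported_on (S : {set 'I_N.+1}) (O : Op) : Prop :=
  (forall x y : cfg N d, (exists i, i \notin S /\ x i <> y i) -> O x y = 0) /\
  (forall x y x' y' : cfg N d,
     (forall i, i \in S -> x i = x' i /\ y i = y' i) ->
     (forall i, i \notin S -> x i = y i /\ x' i = y' i) ->
     O x y = O x' y').

Definition prod_ops (s : seq Op) : Op := foldr op_mul op_id s.

Definition layer (a r : R) (L : Op) : Prop :=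
  exists gs : seq ({set 'I_N.+1} * Op),
    pairwise (fun g h : {set 'I_N.+1} * Op => [disjoint g.1 & h.1]) gs /\
    (forall g, List.In g gs -> unitary g.2 /\ supported_on g.1 g.2 /\ diam_le a g.1 r) /\
    op_eq L (prod_ops (map snd gs)).

Definition fdqc (a : R) (D : nat) (r : R) (U : Op) : Prop :=
  exists ls : seq Op, (size ls <= D)%N /\
    (forall L, List.In L ls -> layer a r L) /\ op_eq U (prod_ops ls).

Definition conj_by (U : Op) (O : Op) : Op := op_mul (op_adj U) (op_mul O U).

Definition shift_cfg (x : cfg N d) : cfg N d := [ffun i => x (ordS i)].
Definition shift_qca (O : Op) : Op := fun x y => O (shift_cfg x) (shift_cfg y).

Definition realizes (U : Op) (alpha : Op -> Op) : Prop :=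
  forall O, op_eq (conj_by U O) (alpha O).
End Ops.

From HB Require Import structures.
From mathcomp Require Import all_boot all_order all_algebra all_fingroup.
From mathcomp Require Import all_classical all_reals all_analysis.
From mathcomp Require Import complex.
From Stdlib Require Import Lia.
From mathcomp Require Import zify ring.
Import Order.TTheory GRing.Theory Num.Theory.
Local Open Scope ring_scope.
Set Implicit Arguments. Unset Strict Implicit. Unset Printing Implicit Defensive.

(* The obstruction is a finite form of the GNVW index of the shift. Let L bound the
   light cone of the circuit, cut the circle open by removing every gate that meets the
   arc W of the first L+1 sites, and call U' the truncated circuit; it is still unitary,
   and conjugation by U' never spreads an operator across W. Let P project onto the
   configurations equal to a fixed letter on an arc Z of L+2 sites far from W, and
   Q := U'^* P U'. Left of Z the truncated circuit still acts as the shift, so Q acts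
   trivially on every site up to and including the first site of Z; right of Z, Q cannot
   spread past W. So Q is a projector supported on Z minus one site. Such a projector
   has trace at least d^(N+2-|Z|), the number of configurations constant on its support,
   whereas tr Q = tr P = d^(N+1-|Z|). *)

Lemma sqr_sum_mul_le (C : numDomainType) (I : finType) (u v : I -> C) :
  (forall i, u i \is Num.real) -> (forall i, v i \is Num.real) ->
  (\sum_i u i * v i) ^+ 2 <= (\sum_i u i ^+ 2) * (\sum_i v i ^+ 2).
Proof.
move=> ru rv.
pose X := (\sum_i u i ^+ 2) * (\sum_i v i ^+ 2); pose Y := (\sum_i u i * v i) ^+ 2.
have eX : \sum_i \sum_j u i ^+ 2 * v j ^+ 2 = X.
  by rewrite /X mulr_suml; apply: eq_bigr => i _; rewrite mulr_sumr.
have eY : \sum_i \sum_j u i * v i * (u j * v j) = Y.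
  by rewrite /Y expr2 mulr_suml; apply: eq_bigr => i _; rewrite mulr_sumr.
have eX' : \sum_i \sum_j u j ^+ 2 * v i ^+ 2 = X by rewrite exchange_big.
have lagrange : \sum_i \sum_j (u i * v j - u j * v i) ^+ 2 = 2 * (X - Y).
  rewrite mulrBr [2 * X]mulr_natl mulr2n -{1}eX -eX' -eY mulr_sumr -big_split -sumrB.
  apply: eq_bigr => i _; rewrite mulr_sumr -big_split -sumrB.
  by apply: eq_bigr => j _ /=; ring.
have : 0 <= 2 * (X - Y).
  rewrite -lagrange; apply: sumr_ge0 => i _; apply: sumr_ge0 => j _.
  by apply: real_exprn_even_ge0; rewrite // rpredB ?rpredM.
by rewrite pmulr_rge0 // subr_ge0.
Qed.

Lemma sqr_norm_sum_mul_le (C : numDomainType) (I : finType) (u v : I -> C) :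
  `|\sum_i u i * v i| ^+ 2 <= (\sum_i `|u i| ^+ 2) * (\sum_i `|v i| ^+ 2).
Proof.
apply: le_trans (sqr_sum_mul_le (fun i => normr_real (u i)) (fun i => normr_real (v i))).
rewrite lerXn2r ?nnegrE ?normr_ge0 //; first by apply: sumr_ge0 => i _; rewrite mulr_ge0.
by apply: le_trans (ler_norm_sum _ _ _) _; apply: ler_sum => i _; rewrite normrM.
Qed.

Lemma all_In (T : Type) (p : pred T) (s : seq T) (x : T) : all p s -> List.In x s -> p x.
Proof. by elim: s => //= y s IH /andP[py ps] [<-|/IH]; last exact. Qed.

Section OperatorAlgebra.
Variables (R : realType) (N d : nat).
Local Notation Op := (Op R N d).
Local Notation cfg := (cfg N d).
Local Notation op_id := (@op_id R N d).
Implicit Types (S T V : {set 'I_N.+1}) (A B G X : Op) (x y z : cfg).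

Lemma op_ext A B : op_eq A B -> A = B.
Proof. by move=> AB; apply: funext => x; apply: funext => y; exact: AB. Qed.

Lemma op_mulA A B G : op_mul A (op_mul B G) = op_mul (op_mul A B) G.
Proof.
apply: op_ext => x y; rewrite /op_mul.
under eq_bigr => z _ do rewrite big_distrr /=.
rewrite exchange_big /=; apply: eq_bigr => w _.
by rewrite big_distrl /=; apply: eq_bigr => z _; rewrite mulrA.
Qed.

Lemma sum_single (F : cfg -> R[i]) z0 : (forall z, z != z0 -> F z = 0) ->
  \sum_z F z = F z0.
Proof. by move=> F0; rewrite (bigD1 z0) //= big1 ?addr0 // => z /F0. Qed.

Lemma op_mul1l A : op_mul op_id A = A.
Proof.
apply: op_ext => x y; rewrite /op_mul (sum_single (z0 := x)) /op_id ?eqxx ?mul1r //.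
by move=> z; rewrite eq_sym => /negbTE ->; rewrite mul0r.
Qed.

Lemma op_mul1r A : op_mul A op_id = A.
Proof.
apply: op_ext => x y; rewrite /op_mul (sum_single (z0 := y)) /op_id ?eqxx ?mulr1 //.
by move=> z /negbTE ->; rewrite mulr0.
Qed.

Lemma op_adjM A B : op_adj (op_mul A B) = op_mul (op_adj B) (op_adj A).
Proof.
apply: op_ext => x y; rewrite /op_adj /op_mul rmorph_sum /=.
by apply: eq_bigr => z _; rewrite rmorphM mulrC.
Qed.

Lemma op_adjK A : op_adj (op_adj A) = A.
Proof. by apply: op_ext => x y; rewrite /op_adj conjCK. Qed.

Lemma op_adj1 : op_adj op_id = op_id.
Proof. by apply: op_ext => x y; rewrite /op_adj /op_id eq_sym conjC_nat. Qed.

Definition upd x (j : 'I_N.+1) (b : 'I_d) : cfg := [ffun i => if i == j then b else x i].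

Lemma upd_same x j b : upd x j b j = b.
Proof. by rewrite ffunE eqxx. Qed.

Lemma upd_other x j b i : i != j -> upd x j b i = x i.
Proof. by rewrite ffunE => /negbTE ->. Qed.

Lemma upd_upd x j b c : upd (upd x j b) j c = upd x j c.
Proof. by apply/ffunP => i; rewrite !ffunE; case: (i == j). Qed.

Lemma upd_id x j : upd x j (x j) = x.
Proof. by apply/ffunP => i; rewrite !ffunE; case: eqP => // ->. Qed.

(* [X] has the form [X' (x) 1] with the identity factor at site [j]. *)
Definition trivial_at (j : 'I_N.+1) X : Prop :=
  (forall x y, x j != y j -> X x y = 0) /\
  (forall x y b, x j = y j -> X (upd x j b) (upd y j b) = X x y).

Definition local_on S X : Prop := forall j, j \notin S -> trivial_at j X.

Lemma trivial_at_adj j X : trivial_at j X -> trivial_at j (op_adj X).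
Proof.
case=> X0 Xb; split=> [x y xy|x y b xy]; rewrite /op_adj; last by rewrite Xb.
by rewrite X0 ?conjC0 // eq_sym.
Qed.

Lemma trivial_atM j A B : trivial_at j A -> trivial_at j B -> trivial_at j (op_mul A B).
Proof.
case=> A0 Ab [B0 Bb]; split=> [x y xy|x y b xy]; rewrite /op_mul.
  apply: big1 => z _; have [xz|xz] := eqVneq (x j) (z j); last by rewrite A0 ?mul0r.
  by rewrite B0 ?mulr0 // -xz.
(* reindex the sum by exchanging the values [x j] and [b] at site [j] *)
pose tau z := upd z j (tperm (x j) b (z j)).
have tauK : involutive tau by move=> z; rewrite /tau upd_upd upd_same tpermK upd_id.
rewrite (reindex_inj (inv_inj tauK)) /=; apply: eq_bigr => z _.
have [zx|zx] := eqVneq (z j) (x j).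
  by rewrite /tau zx tpermL Ab ?Bb // -xy.
rewrite (A0 x z) 1?eq_sym // A0 ?mul0r // upd_same /tau upd_same.
by rewrite -{1}(tpermL (x j) b) (inj_eq (inv_inj (tpermK _ _))) eq_sym.
Qed.

Lemma local_onS S S' X : S \subset S' -> local_on S X -> local_on S' X.
Proof. by move=> /fintype.subsetP sSS' XS j jS'; apply: XS; apply: contra jS'; exact: sSS'. Qed.

Lemma local_onM S A B : local_on S A -> local_on S B -> local_on S (op_mul A B).
Proof. by move=> AS BS j jS; apply: trivial_atM; [apply: AS | apply: BS]. Qed.

Lemma local_on_adj S A : local_on S A -> local_on S (op_adj A).
Proof. by move=> AS j jS; apply/trivial_at_adj/AS. Qed.

Lemma local_on0 S X x y j : local_on S X -> j \notin S -> x j != y j -> X x y = 0.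
Proof. by move=> XS /XS[X0 _]; apply: X0. Qed.

Lemma local_onE S X : local_on S X -> forall x y x' y',
  (forall j, j \in S -> x j = x' j /\ y j = y' j) ->
  (forall j, j \notin S -> x j = y j /\ x' j = y' j) -> X x y = X x' y'.
Proof.
move=> XS x0 y0 x' y'.
suff IH n x y : (#|[set i | x i != x' i]| <= n)%N ->
    (forall j, j \in S -> x j = x' j /\ y j = y' j) ->
    (forall j, j \notin S -> x j = y j /\ x' j = y' j) -> X x y = X x' y'.
  exact: IH.
elim: n x y => [|n IHn] x y + inS offS.
  rewrite leqn0 cards_eq0 => /eqP/setP D0.
  have xx' : x = x' by apply/ffunP => i; move: (D0 i); rewrite !inE => /negbFE/eqP.
  suff -> : y = y' by rewrite xx'.
  apply/ffunP => i; have [/inS[]//|/offS[<- <-]] := boolP (i \in S).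
  by rewrite xx'.
have [D0 _ | [i xi] cardD] := set_0Vmem [set i | x i != x' i].
  by apply: IHn; rewrite // D0 cards0.
rewrite inE in xi.
have iS : i \notin S by apply: contra xi => /inS[-> _].
have [xy _] := offS i iS.
rewrite -(proj2 (XS i iS) x y (x' i) xy); apply: IHn.
- rewrite -ltnS; apply: leq_trans cardD; apply: proper_card; apply/properP; split.
    by apply/fintype.subsetP => j; rewrite !inE ffunE; case: (eqVneq j i) => [->|_]; rewrite ?eqxx.
  by exists i; rewrite !inE ?xi // upd_same eqxx.
- move=> j jS; have ji : j != i by apply: contraNneq iS => <-.
  by rewrite !upd_other //; apply: inS.
- move=> j jS; have [->|ji] := eqVneq j i; last by rewrite !upd_other //; apply: offS.
  by rewrite !upd_same; have [] := offS i iS.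
Qed.

Lemma supported_on_local S X : supported_on S X -> local_on S X.
Proof.
case=> X0 XE j jS; split=> [x y xy|x y b xy]; first by apply: X0; exists j; split => //; apply/eqP.
have [/existsP[i /andP[iS xyi]]|] := boolP [exists i, (i \notin S) && (x i != y i)].
  have ij : i != j by apply: contraNneq xyi => ->; rewrite xy.
  by rewrite !X0 //; exists i; rewrite ?upd_other //; split=> //; exact/eqP.
rewrite negb_exists => /forallP offS; symmetry; apply: XE => i iS.
  have ij : i != j by apply: contraNneq jS => <-.
  by rewrite !upd_other.
move: (offS i); rewrite iS /= negbK => /eqP xyi; split => //.
by have [->|ij] := eqVneq i j; rewrite ?upd_same ?upd_other.
Qed.

Definition mix S x y : cfg := [ffun j => if j \in S then y j else x j].

Lemma local_on_mulE S A B x y : local_on S A -> local_on (~: S) B ->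
  op_mul A B x y = A x (mix S x y) * B (mix S x y) y.
Proof.
move=> AS BS; rewrite /op_mul (sum_single (z0 := mix S x y)) // => z.
apply: contraNeq; rewrite mulf_eq0 negb_or => /andP[A0 B0].
apply/eqP/ffunP => j; rewrite ffunE; case: ifP => jS; apply/eqP.
  have [//|zy] := eqVneq (z j) (y j).
  by move: B0; rewrite (local_on0 BS _ zy) ?eqxx // inE jS.
have [//|zx] := eqVneq (z j) (x j).
by move: A0; rewrite (local_on0 AS (negbT jS)) ?eqxx // eq_sym.
Qed.

Lemma commute_local_disjoint S T A B : local_on S A -> local_on T B ->
  [disjoint S & T] -> op_mul A B = op_mul B A.
Proof.
move=> AS BT dST; have BS : local_on (~: S) B.
  by apply: local_onS BT; rewrite -finset.disjoints_subset disjoint_sym.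
have AT : local_on (~: T) A by apply: local_onS AS; rewrite -finset.disjoints_subset.
apply: op_ext => x y; rewrite (local_on_mulE _ _ AS BS) (local_on_mulE _ _ BT AT) mulrC.
have [/existsP[j /and3P[jS jT xy]]|] := boolP [exists j, [&& j \notin S, j \notin T & x j != y j]].
  by rewrite (local_on0 BT jT) ?mul0r 1?(local_on0 AS jS) ?mulr0 //
     !ffunE ?(negbTE jS) ?(negbTE jT).
rewrite negb_exists => /forallP offST.
have xy j : j \notin S -> j \notin T -> x j = y j.
  by move=> jS jT; move: (offST j); rewrite jS jT /= negbK => /eqP.
congr (_ * _); [apply: (local_onE BT) | apply: (local_onE AS)] => j; rewrite !ffunE.
- by move=> jT; rewrite jT (disjointFl dST jT).
- by move=> jT; rewrite (negbTE jT); case: ifP => // /negbT /xy ->.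
- by move=> jS; rewrite jS (disjointFr dST jS).
- by move=> jS; rewrite (negbTE jS); case: ifP => // /negbT /(xy _ jS) ->.
Qed.

Lemma unitaryE U : unitary U ->
  op_mul (op_adj U) U = op_id /\ op_mul U (op_adj U) = op_id.
Proof. by case=> U1 U2; split; apply: op_ext. Qed.

Lemma unitary1 : unitary op_id.
Proof. by split => x y; rewrite op_adj1 op_mul1l. Qed.

Lemma unitaryM A B : unitary A -> unitary B -> unitary (op_mul A B).
Proof.
move=> /unitaryE[A1 A2] /unitaryE[B1 B2]; split => x y; rewrite op_adjM.
  by rewrite op_mulA -(op_mulA (op_adj B)) A1 op_mul1r B1.
by rewrite op_mulA -(op_mulA A) B2 op_mul1r A2.
Qed.

Lemma conj_by1 X : conj_by op_id X = X.
Proof. by rewrite /conj_by op_adj1 op_mul1l op_mul1r. Qed.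

Lemma conj_by_comp A B X : conj_by (op_mul A B) X = conj_by B (conj_by A X).
Proof. by rewrite /conj_by op_adjM !op_mulA. Qed.

Lemma conj_byM U A B : unitary U ->
  conj_by U (op_mul A B) = op_mul (conj_by U A) (conj_by U B).
Proof. by move=> /unitaryE[_ U2]; rewrite /conj_by !op_mulA -(op_mulA _ U) U2 op_mul1r. Qed.

Lemma conj_by_adj U X : op_adj (conj_by U X) = conj_by U (op_adj X).
Proof. by rewrite /conj_by !op_adjM op_adjK op_mulA. Qed.

Lemma conj_by_disjoint_local G X S T : unitary G -> local_on S G -> local_on T X ->
  [disjoint T & S] -> conj_by G X = X.
Proof.
move=> /unitaryE[G1 _] GS XT dTS.
by rewrite /conj_by (commute_local_disjoint XT GS dTS) op_mulA G1 op_mul1l.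
Qed.

Lemma local_on_conj_by S G X : local_on S G -> local_on S X -> local_on S (conj_by G X).
Proof. by move=> GS XS; apply: local_onM; [apply: local_on_adj | apply: local_onM]. Qed.

Definition op_tr X : R[i] := \sum_x X x x.

Lemma op_tr_mulC A B : op_tr (op_mul A B) = op_tr (op_mul B A).
Proof.
rewrite /op_tr /op_mul exchange_big /=; apply: eq_bigr => x _.
by apply: eq_bigr => z _; rewrite mulrC.
Qed.

Lemma op_tr_conj_by U X : unitary U -> op_tr (conj_by U X) = op_tr X.
Proof. by move=> /unitaryE[_ U2]; rewrite /conj_by op_tr_mulC -op_mulA U2 op_mul1r. Qed.

End OperatorAlgebra.

Section CircleDistance.
Variable N : nat.
Implicit Types (S V : {set 'I_N.+1}).

Definition ldist (i j : 'I_N.+1) : nat := (i - j + (j - i))%N.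
Definition cdist (i j : 'I_N.+1) : nat := minn (ldist i j) (N.+1 - ldist i j).

Lemma cdistxx i : cdist i i = 0%N.
Proof. by rewrite /cdist /ldist subnn. Qed.

Lemma cdist_triangle i j k : (cdist i k <= cdist i j + cdist j k)%N.
Proof.
rewrite /cdist /ldist; have := ltn_ord i; have := ltn_ord j; have := ltn_ord k; lia.
Qed.

Definition cball V (k : nat) : {set 'I_N.+1} := [set j | [exists v in V, (cdist v j <= k)%N]].

Lemma sub_cball V k : V \subset cball V k.
Proof.
by apply/fintype.subsetP => j jV; rewrite inE; apply/existsP; exists j; rewrite jV cdistxx.
Qed.

Lemma cball_le V k k' : (k <= k')%N -> cball V k \subset cball V k'.
Proof.
move=> kk'; apply/fintype.subsetP => j; rewrite !inE => /existsP[v /andP[vV vj]].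
by apply/existsP; exists v; rewrite vV (leq_trans vj kk').
Qed.

Lemma cballS V V' k : V \subset V' -> cball V k \subset cball V' k.
Proof.
move=> /fintype.subsetP VV'; apply/fintype.subsetP => j; rewrite !inE => /existsP[v /andP[vV vj]].
by apply/existsP; exists v; rewrite VV'.
Qed.

Lemma cball_cball V k k' : cball (cball V k) k' \subset cball V (k + k').
Proof.
apply/fintype.subsetP => j; rewrite !inE => /existsP[u /andP[]].
rewrite inE => /existsP[v /andP[vV vu]] uj.
by apply/existsP; exists v; rewrite vV (leq_trans (cdist_triangle v u j)) ?leq_add.
Qed.

Lemma cball1 (k : 'I_N.+1) r j : (j \in cball [set k] r) = (cdist k j <= r)%N.
Proof.
rewrite inE; apply/existsP/idP => [[v /andP[/set1P -> //]] | kj].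
by exists k; rewrite inE eqxx.
Qed.

Definition cdiam_le (m : nat) S := forall i j, i \in S -> j \in S -> (cdist i j <= m)%N.

Lemma cdiam_le_meet_sub m S V : cdiam_le m S -> ~~ [disjoint S & V] -> S \subset cball V m.
Proof.
move=> Sm; rewrite /disjoint => /pred0Pn[v /andP[vS vV]]; apply/fintype.subsetP => j jS.
by rewrite inE; apply/existsP; exists v; apply/andP; split; [exact: vV | exact: Sm].
Qed.

End CircleDistance.

Section Circuits.
Variables (R : realType) (N d : nat).
Local Notation Op := (Op R N d).
Local Notation op_id := (@op_id R N d).
Implicit Types (S T V W : {set 'I_N.+1}) (X : Op).

Definition gate := ({set 'I_N.+1} * Op)%type.

Definition gate_op (p : gate -> bool) (g : gate) : Op := if p g then g.2 else op_id.
Definition layer_op (p : gate -> bool) (gs : seq gate) : Op := prod_ops (map (gate_op p) gs).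
Definition circuit_op (p : gate -> bool) (gss : seq (seq gate)) : Op :=
  prod_ops (map (layer_op p) gss).

Lemma eq_in_layer_op (p q : gate -> bool) gs :
  (forall g, List.In g gs -> p g = q g) -> layer_op p gs = layer_op q gs.
Proof.
elim: gs => //= g gs IH pq; rewrite /layer_op /= /gate_op pq; last by left.
by congr op_mul; apply: IH => h hgs; apply: pq; right.
Qed.

Lemma local_on_conj_layer (p : gate -> bool) gs T X :
  (forall g, List.In g gs -> p g -> local_on T g.2) -> local_on T X ->
  local_on T (conj_by (layer_op p gs) X).
Proof.
elim: gs X => [|g gs IH] X gT XT; first by rewrite /layer_op /= conj_by1.
rewrite /layer_op /= conj_by_comp; apply: IH => [h hgs|]; first by apply: gT; right.
rewrite /gate_op; case: ifP => pg; last by rewrite conj_by1.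
by apply: local_on_conj_by => //; apply: gT => //; left.
Qed.

Definition disjoint_gates (gs : seq gate) := pairwise (fun g h : gate => [disjoint g.1 & h.1]) gs.

Definition unitary_gates (gs : seq gate) :=
  forall g, List.In g gs -> unitary g.2 /\ local_on g.1 g.2.

(* Only the gates meeting the support [V] of [X] matter: the others commute with [X]
   and, being disjoint from the gates that do meet [V], with everything that [X] becomes. *)
Lemma conj_layer_meeting (p : gate -> bool) gs V X :
  disjoint_gates gs -> unitary_gates gs -> local_on V X ->
  conj_by (layer_op p gs) X =
  conj_by (layer_op (fun g => p g && ~~ [disjoint g.1 & V]) gs) X.
Proof.
elim: gs V X => [//|g gs IH] V X /= /andP[gdis dis] ugs XV.
have [gU gloc] := ugs g (or_introl erefl).
have ugs' : unitary_gates gs by move=> h hgs; apply: ugs; right.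
rewrite /layer_op /= !conj_by_comp /gate_op.
case: (boolP (p g && ~~ [disjoint g.1 & V])) => [/andP[-> _] | pgV].
  have XgV : local_on (V :|: g.1) (conj_by g.2 X).
    apply: local_on_conj_by; [apply: local_onS gloc | apply: local_onS XV].
      exact: finset.subsetUr.
    exact: finset.subsetUl.
  rewrite (IH _ _ dis ugs' XgV); congr conj_by; apply: eq_in_layer_op => h hgs.
  have dgh : [disjoint h.1 & g.1] by rewrite disjoint_sym; exact: all_In gdis hgs.
  by move: dgh; rewrite !finset.disjoints_subset finset.setCU finset.subsetI => ->; rewrite andbT.
have -> : conj_by (if p g then g.2 else op_id) X = X.
  case: ifP => pg; last exact: conj_by1.
  by apply: conj_by_disjoint_local gU gloc XV _; rewrite disjoint_sym; move: pgV; rewrite pg negbK.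
by rewrite /= conj_by1; apply: IH.
Qed.

Lemma unitary_circuit_op (p : gate -> bool) gss :
  (forall gs, List.In gs gss -> unitary_gates gs) -> unitary (circuit_op p gss).
Proof.
elim: gss => [|gs gss IH] ugss; first exact: (@unitary1 R N d).
apply: unitaryM; last by apply: IH => gs' ?; apply: ugss; right.
have : unitary_gates gs by apply: ugss; left.
elim: gs {ugss} => [|g gs IHgs] ugs; first exact: (@unitary1 R N d).
apply: unitaryM; last by apply: IHgs => h ?; apply: ugs; right.
by rewrite /gate_op; case: (p g); [case: (ugs g (or_introl erefl)) | apply: unitary1].
Qed.

Definition local_layer (m : nat) (gs : seq gate) :=
  [/\ disjoint_gates gs, unitary_gates gs & forall g, List.In g gs -> cdiam_le m g.1].

Definition avoids W (g : gate) := [disjoint g.1 & W].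

Section LightCone.
Variables (m : nat) (gss : seq (seq gate)).
Hypothesis gssP : forall gs, List.In gs gss -> local_layer m gs.

Lemma local_on_conj_circuit_avoids W V0 k X :
  local_on (cball V0 k :\: W) X ->
  local_on (cball V0 (k + size gss * m) :\: W) (conj_by (circuit_op (avoids W) gss) X).
Proof.
elim: gss gssP k X => [|gs gss' IH] layersP k X XV; first by rewrite /circuit_op conj_by1 addn0.
have [dis ugs diam] := layersP gs (or_introl erefl).
rewrite /circuit_op /= conj_by_comp mulSn addnA.
apply: IH => [gs' ?|]; first by apply: layersP; right.
rewrite (conj_layer_meeting _ dis ugs XV); apply: local_on_conj_layer => [g ggs /andP[gW gV]|].
  apply: (local_onS _ (proj2 (ugs g ggs))); rewrite finset.subsetD.
  move: gW; rewrite /avoids => ->; rewrite andbT.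
  move/fintype.subset_trans: (cdiam_le_meet_sub (diam g ggs) gV); apply.
  by apply: fintype.subset_trans (cball_cball V0 k m); apply: cballS; exact: finset.subsetDl.
by apply: local_onS XV; apply: finset.setSD; apply: cball_le; apply: leq_addr.
Qed.

Lemma conj_circuit_avoids W V0 k X :
  local_on (cball V0 k) X -> [disjoint cball V0 (k + size gss * m) & W] ->
  conj_by (circuit_op (avoids W) gss) X = conj_by (circuit_op predT gss) X.
Proof.
elim: gss gssP k X => [//|gs gss' IH] layersP k X XV dW.
have [dis ugs diam] := layersP gs (or_introl erefl).
have meet_sub g : List.In g gs -> ~~ [disjoint g.1 & cball V0 k] -> g.1 \subset cball V0 (k + m).
  move=> ggs gV; move/fintype.subset_trans: (cdiam_le_meet_sub (diam g ggs) gV); apply.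
  exact: cball_cball.
rewrite /= mulSn addnA in dW; rewrite /circuit_op /= !conj_by_comp.
have -> : conj_by (layer_op (avoids W) gs) X = conj_by (layer_op predT gs) X.
  rewrite (conj_layer_meeting (avoids W) dis ugs XV) (conj_layer_meeting predT dis ugs XV).
  congr conj_by; apply: eq_in_layer_op => g ggs /=.
  have [gV|] := boolP (~~ [disjoint g.1 & cball V0 k]); rewrite ?andbF // !andbT.
  apply: disjointWl (meet_sub g ggs gV) _; apply: disjointWl dW.
  by apply: cball_le; apply: leq_addr.
apply: IH dW => [gs' ?|]; first by apply: layersP; right.
rewrite (conj_layer_meeting _ dis ugs XV); apply: local_on_conj_layer => [g ggs /andP[_ gV]|].
  exact: local_onS (meet_sub g ggs gV) (proj2 (ugs g ggs)).
by apply: local_onS XV; apply: cball_le; apply: leq_addr.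
Qed.

End LightCone.
End Circuits.

Section SiteOperators.
Variables (R : realType) (N d : nat).
Local Notation Op := (Op R N d).
Local Notation cfg := (cfg N d).
Implicit Types (S T : {set 'I_N.+1}) (o : 'I_d) (x y : cfg).

Definition const_on S o x := [forall i in S, x i == o].
Definition agree_off S x y := [forall i in ~: S, y i == x i].

Definition proj_const S o : Op := fun x y => ((x == y) && const_on S o x)%:R.

Lemma local_proj_const S o : local_on S (proj_const S o).
Proof.
move=> j jS; split=> [x y xy|x y b xy]; rewrite /proj_const.
  by case: eqP => [E|//]; rewrite E eqxx in xy.
have -> : (upd x j b == upd y j b) = (x == y).
  apply/eqP/eqP => [/ffunP E|-> //]; apply/ffunP => i.
  by have [-> //|ij] := eqVneq i j; move: (E i); rewrite !upd_other.
congr ((_ && _)%:R); apply: eq_forallb_in => i iS.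
by rewrite upd_other //; apply: contraNneq jS => <-.
Qed.

Lemma proj_const_idem S o : op_mul (proj_const S o) (proj_const S o) = proj_const S o.
Proof.
apply: op_ext => x y; rewrite /op_mul (sum_single (z0 := x)).
  by rewrite /proj_const eqxx; case: (const_on S o x); case: (x == y); rewrite ?mulr1 ?mulr0.
by move=> z; rewrite /proj_const eq_sym => /negbTE ->; rewrite mul0r.
Qed.

Lemma proj_const_adj S o : op_adj (proj_const S o) = proj_const S o.
Proof.
apply: op_ext => x y; rewrite /op_adj /proj_const conjC_nat.
by have [->|xy] := eqVneq y x; rewrite // eq_sym (negbTE xy).
Qed.

Lemma op_tr_proj_const S o : op_tr (proj_const S o) = #|[set x | const_on S o x]|%:R.
Proof.
rewrite /op_tr /proj_const -sum1_card natr_sum (big_mkcond (fun x => x \in _)) /=.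
by apply: eq_bigr => x _; rewrite eqxx inE; case: (const_on S o x).
Qed.

Lemma card_const_on_proper S T o o' : o' != o -> T \proper S ->
  (#|[set x | const_on S o x]| < #|[set x | const_on T o x]|)%N.
Proof.
move=> oo' /properP[/fintype.subsetP TS [s sS sT]]; apply: proper_card; apply/properP; split.
  apply/fintype.subsetP => x; rewrite !inE => /forall_inP xS.
  by apply/forall_inP => i /TS; apply: xS.
exists [ffun i => if i == s then o' else o]; rewrite !inE.
  by apply/forall_inP => i iT; rewrite ffunE; case: (eqVneq i s) => [eis|//]; rewrite -eis iT in sT.
by apply/forall_inP => /(_ s sS); rewrite ffunE eqxx (negbTE oo').
Qed.

Section Projector.
Variable Q : Op.
Hypotheses (Q_idem : op_mul Q Q = Q) (Q_adj : op_adj Q = Q).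

Lemma proj_conj x y : Q y x = (Q x y)^*.
Proof. by rewrite -{1}Q_adj. Qed.

Lemma proj_diag x : Q x x = \sum_y `|Q x y| ^+ 2.
Proof. by rewrite -{1}Q_idem; apply: eq_bigr => y _; rewrite normCK (proj_conj x y). Qed.

Lemma proj_diag_ge0 x : 0 <= Q x x.
Proof. by rewrite proj_diag; apply: sumr_ge0 => y _; apply: exprn_ge0. Qed.

Lemma proj_norm_sqr_le x y : `|Q x y| ^+ 2 <= Q x x * Q y y.
Proof.
rewrite -{1}Q_idem; apply: le_trans (sqr_norm_sum_mul_le _ _) _.
rewrite !proj_diag; apply: ler_pM.
- by apply: sumr_ge0 => z _; apply: exprn_ge0.
- by apply: sumr_ge0 => z _; apply: exprn_ge0.
- exact: lexx.
- rewrite le_eqVlt; apply/orP; left.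
  by apply/eqP/eq_bigr => z _; rewrite (proj_conj y z) norm_conjC.
Qed.

(* Cauchy-Schwarz bounds [Q x x = sum_y |Q x y|^2] by [Q x x] times the
   diagonal mass of the block of [x], which locality confines to [agree_off S x]. *)
Lemma proj_block_ge1 S x : local_on S Q -> Q x x != 0 ->
  1 <= \sum_(y | agree_off S x y) Q y y.
Proof.
move=> QS Qx0; have Qx_gt0 : 0 < Q x x by rewrite lt_def Qx0 proj_diag_ge0.
rewrite -(ler_pM2l Qx_gt0) mulr1 mulr_sumr {1}proj_diag (bigID (agree_off S x)) /=.
rewrite [X in _ + X]big1 ?addr0 => [|y]; first by apply: ler_sum => y _; apply: proj_norm_sqr_le.
move=> /forall_inPn[i iS yx]; rewrite inE in iS.
by rewrite (local_on0 QS iS) ?normr0 ?expr0n // eq_sym.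
Qed.

(* Each [x] constant on [S] indexes the block of configurations agreeing with it off
   [S]; by locality the nonzero entry [Q x0 x0] has a copy [Q x1 x1] in that block, whose
   diagonal mass is therefore at least 1. *)
Lemma proj_trace_ge_card S o : local_on S Q -> op_tr Q != 0 ->
  #|[set x | const_on S o x]|%:R <= op_tr Q.
Proof.
move=> QS trQ; have [x0 Qx0|Q0] := pickP (fun x => Q x x != 0); last first.
  by move: trQ; rewrite /op_tr big1 ?eqxx // => x _; move/negbFE/eqP: (Q0 x).
pose set_on y : cfg := [ffun i => if i \in S then o else y i].
rewrite /op_tr (partition_big set_on (const_on S o)) /=; last first.
  by move=> y _; apply/forall_inP => i iS; rewrite ffunE iS.
rewrite -sum1_card natr_sum (eq_bigl (const_on S o)) => [|x]; last by rewrite inE.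
apply: ler_sum => x xS.
pose x1 : cfg := [ffun i => if i \in S then x0 i else x i].
have -> : \sum_(y | set_on y == x) Q y y = \sum_(y | agree_off S x1 y) Q y y.
  apply: eq_bigl => y; apply/eqP/forall_inP => [/ffunP yx i|yx].
    by rewrite inE => /negbTE iS; move: (yx i); rewrite /x1 !ffunE iS => ->.
  apply/ffunP => i; rewrite ffunE; case: ifP => iS.
    by move/forall_inP: xS => /(_ i iS) /eqP ->.
  have /eqP : y i == x1 i by apply: yx; rewrite inE iS.
  by rewrite /x1 ffunE iS.
apply: proj_block_ge1 => //; suff -> : Q x1 x1 = Q x0 x0 by [].
by apply: (local_onE QS) => j jS; rewrite !ffunE ?jS ?(negbTE jS).
Qed.

End Projector.

Lemma proj_not_local_proper S T o o' (Q : Op) : o' != o -> T \proper S ->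
  op_mul Q Q = Q -> op_adj Q = Q -> op_tr Q = #|[set x | const_on S o x]|%:R ->
  ~ local_on T Q.
Proof.
move=> oo' TS Q_idem Q_adj trQ QT.
have trQ0 : op_tr Q != 0.
  rewrite trQ pnatr_eq0 -lt0n; apply/card_gt0P; exists [ffun => o].
  by rewrite inE; apply/forall_inP => i _; rewrite ffunE.
have := proj_trace_ge_card Q_idem Q_adj o QT trQ0.
by rewrite trQ ler_nat leqNgt (card_const_on_proper oo' TS).
Qed.

Definition site_unit (k : 'I_N.+1) (a b : 'I_d) : Op := fun x y =>
  ((x k == a) && (y k == b) && [forall i, (i != k) ==> (x i == y i)])%:R.

Lemma site_unit_neq0 k a b x y : site_unit k a b x y != 0 -> y = upd x k b /\ x k = a.
Proof.
rewrite pnatr_eq0 eqb0 negbK => /andP[/andP[/eqP xa /eqP yb] /forallP xy]; split => //.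
apply/ffunP => i; have [->|ik] := eqVneq i k; first by rewrite upd_same.
by rewrite upd_other //; move/implyP: (xy i) => /(_ ik) /eqP.
Qed.

Lemma site_unit_updl k a b y : site_unit k a b (upd y k a) y = (y k == b)%:R.
Proof.
rewrite /site_unit upd_same eqxx; congr (_%:R).
suff -> : [forall i, (i != k) ==> (upd y k a i == y i)] by rewrite andbT.
by apply/forallP => i; apply/implyP => ik; rewrite upd_other.
Qed.

Lemma site_unit_updr k a b x : site_unit k a b x (upd x k b) = (x k == a)%:R.
Proof.
rewrite /site_unit upd_same eqxx andbT; congr (_%:R).
suff -> : [forall i, (i != k) ==> (x i == upd x k b i)] by rewrite andbT.
by apply/forallP => i; apply/implyP => ik; rewrite upd_other.
Qed.

Lemma op_mul_site_unit X k a b x y :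
  op_mul X (site_unit k a b) x y = if y k == b then X x (upd y k a) else 0.
Proof.
rewrite /op_mul (sum_single (z0 := upd y k a)) => [|z].
  by rewrite site_unit_updl; case: (y k == b); rewrite ?mulr1 ?mulr0.
apply: contraNeq; rewrite mulf_eq0 negb_or => /andP[_ /site_unit_neq0[-> za]].
by rewrite upd_upd -za upd_id.
Qed.

Lemma site_unit_mul X k a b x y :
  op_mul (site_unit k a b) X x y = if x k == a then X (upd x k b) y else 0.
Proof.
rewrite /op_mul (sum_single (z0 := upd x k b)) => [|z].
  by rewrite site_unit_updr; case: (x k == a); rewrite ?mul1r ?mul0r.
by apply: contraNeq; rewrite mulf_eq0 negb_or => /andP[/site_unit_neq0[->]].
Qed.

Lemma trivial_at_commute k X :
  (forall a b, op_mul X (site_unit k a b) = op_mul (site_unit k a b) X) -> trivial_at k X.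
Proof.
move=> XE; split=> [x y xy|x y b xy].
  have := congr1 (fun F => F x y) (XE (y k) (y k)) => /=.
  by rewrite op_mul_site_unit site_unit_mul eqxx upd_id (negbTE xy).
have := congr1 (fun F => F x (upd y k b)) (XE (x k) b) => /=.
by rewrite op_mul_site_unit site_unit_mul !upd_same !eqxx upd_upd xy upd_id.
Qed.

Lemma local_site_unit k a b : local_on [set k] (site_unit k a b).
Proof.
move=> j; rewrite inE => jk; split=> [x y xy|x y c xy]; rewrite /site_unit.
  case: (boolP (_ && _ && _)) => // /andP[_ /forallP/(_ j)].
  by rewrite jk (negbTE xy).
rewrite eq_sym in jk; rewrite !upd_other //; congr ((_ && _ && _)%:R); apply: eq_forallb => i.
by have [->|ij] := eqVneq i j; rewrite ?upd_same ?xy ?eqxx ?implybT // !upd_other.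
Qed.

Lemma shift_qca_site_unit k a b : shift_qca (site_unit k a b) = site_unit (ordS k) a b.
Proof.
apply: op_ext => x y; rewrite /shift_qca /site_unit /shift_cfg !ffunE.
congr ((_ && _ && _)%:R); apply/forallP/forallP => xy i; apply/implyP => ik.
  move/implyP: (xy (ord_pred i)); rewrite !ffunE ord_predK; apply.
  by apply: contraNneq ik => <-; rewrite ord_predK.
by move/implyP: (xy (ordS i)); rewrite !ffunE (inj_eq (can_inj (@ordSK _))); apply.
Qed.

End SiteOperators.

Arguments proj_const {R N d}.
Arguments site_unit {R N d}.

Section Geometry.
Variables (R : realType) (N : nat).

Definition arc_angle (k : nat) : R := pi * k%:R / N.+1%:R.

Lemma site_pt_dot (i j : 'I_N.+1) :
  (site_pt R i *m (site_pt R j)^T) 0 0 = cos (arc_angle i - arc_angle j).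
Proof. by rewrite !mxE cosB !big_ord_recl big_ord0 /= !mxE /= !mul0r !addr0. Qed.

Lemma cos_arc_angleB (i j : 'I_N.+1) :
  cos (arc_angle i - arc_angle j) = cos (arc_angle (ldist i j)).
Proof.
rewrite /arc_angle /ldist; case: (leqP j i) => ji.
  have -> : (j - i = 0)%N by apply/eqP; rewrite subn_eq0.
  by rewrite addn0 natrB //; congr cos; ring.
have -> : (i - j = 0)%N by apply/eqP; rewrite subn_eq0 ltnW.
by rewrite add0n natrB 1?ltnW // -cosN; congr cos; ring.
Qed.

Lemma cos_arc_angle_ge0 (k : nat) : (2 * k <= N.+1)%N -> 0 <= cos (arc_angle k).
Proof.
move=> kN; apply: cos_ge0_pihalf; rewrite /arc_angle; apply/andP; split.
  apply: (@le_trans _ _ 0); first by rewrite oppr_le0 divr_ge0 ?pi_ge0.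
  by rewrite !mulr_ge0 ?pi_ge0 ?invr_ge0 ?ler0n.
rewrite -mulrA ler_pM2l ?pi_gt0 // ler_pdivrMr ?ltr0n // mulrC ler_pdivlMr ?ltr0n //.
by rewrite -natrM ler_nat; lia.
Qed.

(* Antipodal unit vectors are the same point of RP^3: the absolute value in the
   projective distance folds the arc [0, pi] of RP^1 into the circle metric. *)
Lemma norm_cos_arc_angle (i j : 'I_N.+1) :
  `|cos (arc_angle (ldist i j))| = cos (arc_angle (cdist i j)).
Proof.
have ijN : (ldist i j < N.+1)%N by rewrite /ldist; have := ltn_ord i; have := ltn_ord j; lia.
rewrite /cdist; case: (leqP (ldist i j) (N.+1 - ldist i j)) => h.
  by rewrite ger0_norm //; apply: cos_arc_angle_ge0; lia.
have -> : arc_angle (ldist i j) = - arc_angle (N.+1 - ldist i j) + pi.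
  have N0 : N.+1%:R != 0 :> R by rewrite pnatr_eq0.
  by rewrite /arc_angle natrB 1?ltnW //; field.
by rewrite cosDpi cosN normrN ger0_norm //; apply: cos_arc_angle_ge0; lia.
Qed.

Lemma site_dist_cdist (a : R) (i j : 'I_N.+1) : site_dist a i j = a * (cdist i j)%:R.
Proof.
rewrite /site_dist /rp3_dist site_pt_dot cos_arc_angleB norm_cos_arc_angle cosK; last first.
  rewrite in_itv /= /arc_angle !mulr_ge0 ?pi_ge0 ?invr_ge0 ?ler0n //=.
  rewrite -mulrA ger_pMr ?pi_gt0 // ler_pdivrMr ?ltr0n // mul1r ler_nat /cdist; lia.
have N0 : N.+1%:R != 0 :> R by rewrite pnatr_eq0.
have pi0 : pi != 0 :> R by rewrite gt_eqF // pi_gt0.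
rewrite /rp3_scale /arc_angle; move: N0 pi0; set n := N.+1%:R; set p := pi.
by clearbody n p => N0 pi0; field; rewrite N0 pi0.
Qed.

Lemma cdiam_le_of_diam_le (a r : R) (S : {set 'I_N.+1}) : 0 < a ->
  diam_le a S r -> cdiam_le (Num.Def.truncn (r / a)) S.
Proof.
move=> a0 Sr i j iS jS; have := Sr i j iS jS; rewrite site_dist_cdist => aij.
have ij : (cdist i j)%:R <= r / a by rewrite ler_pdivlMr // mulrC.
by rewrite truncn_ge_nat // (le_trans _ ij).
Qed.

End Geometry.

Lemma fdqc_local_circuit (R : realType) (N d D : nat) (a r : R) (U : Op R N d) :
  0 < a -> fdqc a D r U ->
  exists gss : seq (seq (gate R N d)), [/\ (size gss <= D)%N, U = circuit_op predT gss &
    forall gs, List.In gs gss -> local_layer (Num.Def.truncn (r / a)) gs].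
Proof.
move=> a0 [ls [lsD [lsP /op_ext ->]]].
suff [gss [size_gss -> gssP]] : exists gss : seq (seq (gate R N d)), [/\ size gss = size ls,
    prod_ops ls = circuit_op predT gss &
    forall gs, List.In gs gss -> local_layer (Num.Def.truncn (r / a)) gs].
  by exists gss; rewrite size_gss.
elim: ls lsP {lsD} => [|L ls IH] lsP; first by exists [::].
have [gss [size_gss prod_gss gssP]] := IH (fun L' L'ls => lsP L' (or_intror L'ls)).
have [gs [dis [gsP /op_ext ->]]] := lsP L (or_introl erefl).
exists (gs :: gss); split; first by rewrite /= size_gss.
  by rewrite /= prod_gss /circuit_op /= /layer_op (eq_map (_ : gate_op predT =1 snd)).
move=> gs' [<-|/gssP //]; split => // g ggs; have [gU [gS gdiam]] := gsP g ggs.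
  by split => //; apply: supported_on_local.
exact: cdiam_le_of_diam_le.
Qed.

Section TruncatedShift.
Variables (R : realType) (N d m L : nat) (gss : seq (seq (gate R N d))).
Hypotheses (gssP : forall gs, List.In gs gss -> local_layer m gs)
  (depth : (size gss * m <= L)%N) (N_large : (5 * L + 10 <= N)%N)
  (shiftU : forall X, conj_by (circuit_op predT gss) X = shift_qca X).

Let W := [set j : 'I_N.+1 | (j <= L)%N].
Let U' := circuit_op (avoids W) gss.

Lemma unitary_truncated : unitary U'.
Proof. by apply: unitary_circuit_op => gs /gssP[]. Qed.

Lemma conj_truncated_site_unit (k : 'I_N.+1) a b : (2 * L < k)%N -> (k + L < N)%N ->
  conj_by U' (site_unit k a b) = site_unit (ordS k) a b.
Proof.
move=> kL kN; rewrite (conj_circuit_avoids gssP (V0 := [set k]) (k := 0)) ?shiftU.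
- exact (shift_qca_site_unit R k a b).
- exact (local_onS (sub_cball _ _) (local_site_unit R a b)).
rewrite -setI_eq0; apply/eqP/setP => j; rewrite finset.in_setI cball1 !inE add0n.
apply/negbTE/negP => /andP[/leq_trans/(_ depth) kj jL]; move: kj.
by rewrite /cdist /ldist; have := ltn_ord k; have := ltn_ord j; lia.
Qed.

Lemma truncated_proj_const_local o :
  local_on [set j : 'I_N.+1 | (N - L.+1 < j)%N]
    (conj_by U' (proj_const [set j : 'I_N.+1 | (N - L.+1 <= j)%N] o)).
Proof.
set Z := [set j : 'I_N.+1 | (N - L.+1 <= j)%N]; set Q := conj_by U' _.
have Qcone : local_on (cball Z L :\: W) Q.
  have PZ : local_on (cball Z 0 :\: W) (proj_const Z o : Op R N d).
    apply: (local_onS _ (local_proj_const R (S := Z) o)); rewrite finset.subsetD sub_cball /=.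
    by rewrite -setI_eq0; apply/eqP/setP => j; rewrite !inE; apply/negbTE; lia.
  apply: (local_onS _ (local_on_conj_circuit_avoids gssP PZ)).
  by apply: finset.setSD; apply: cball_le; rewrite add0n.
move=> j; rewrite inE -leqNgt => jZ.
have [jcone|jcone] := boolP (j \in cball Z L :\: W); last exact: (Qcone j jcone).
have [jL jZL] : (L < j)%N /\ (N - 2 * L.+1 <= j)%N.
  move: jcone; rewrite !inE -ltnNge => /andP[jL /existsP[v /andP[]]]; rewrite inE => vZ vj.
  by split=> //; move: vj; rewrite /cdist /ldist; have := ltn_ord v; have := ltn_ord j; lia.
have kN : (j.-1 < N.+1)%N by have := ltn_ord j; lia.
pose k : 'I_N.+1 := Ordinal kN.
have Sk : ordS k = j by apply: val_inj; rewrite /= prednK ?modn_small //; lia.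
have k_bounds : (2 * L < k)%N /\ (k + L < N)%N by rewrite /=; lia.
apply: trivial_at_commute => a b.
rewrite -Sk -!(conj_truncated_site_unit a b k_bounds.1 k_bounds.2) /Q.
rewrite -!(conj_byM _ _ unitary_truncated); congr conj_by.
apply: commute_local_disjoint (local_proj_const R (S := Z) o) (local_site_unit R (k := k) a b) _.
by rewrite disjoint_sym disjoints1 inE /=; lia.
Qed.

End TruncatedShift.

Unset Implicit Arguments.

Theorem mainTheorem16 (R : realType) (d : nat) (hd : (2 <= d)%N)
    (a : R) (ha : 0 < a) (D : nat) (r : R) :
  exists N0 : nat, forall N : nat, (N0 <= N)%N ->
    ~ (exists U : Op R N d,
         unitary U /\ fdqc a D r U /\ realizes U (@shift_qca R N d)).
Proof.
pose L := (D * Num.Def.truncn (r / a))%N.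
exists (5 * L + 10)%N => N N_large [U [_ [Ufdqc Ushift]]].
have [gss [depthD Ugss gssP]] := fdqc_local_circuit ha Ufdqc.
have depth : (size gss * Num.Def.truncn (r / a) <= L)%N by rewrite leq_mul2r depthD orbT.
have shiftU X : conj_by (circuit_op predT gss) X = shift_qca X.
  by rewrite -Ugss; apply/op_ext/Ushift.
have U'u : unitary (circuit_op (avoids [set j : 'I_N.+1 | (j <= L)%N]) gss).
  by apply: unitary_circuit_op => gs /gssP[].
pose o : 'I_d := Ordinal (ltnW hd); pose o' : 'I_d := Ordinal hd.
have ZN : (N - L.+1 < N.+1)%N by lia.
have Qloc := truncated_proj_const_local gssP depth N_large shiftU o.
apply: (proj_not_local_proper (S := [set j : 'I_N.+1 | (N - L.+1 <= j)%N]) (o := o) (o' := o')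
  _ _ _ _ _ Qloc) => //.
- apply/properP; split; first by apply/fintype.subsetP => j; rewrite !inE; exact: ltnW.
  by exists (Ordinal ZN); rewrite !inE /= ?leqnn ?ltnn.
- by rewrite -conj_byM // proj_const_idem.
- by rewrite conj_by_adj proj_const_adj.
- by rewrite op_tr_conj_by // op_tr_proj_const.
Qed.
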